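(* With the notation of the context, let $\beta^*=\inf_{x\in\Delta}F(x)$ and $\alpha^*=\inf_{x\in\Delta}G(x)$. Then $1<\beta^*\le\alpha^*\le\alpha_n$.
   Context: Fix an integer $n\ge2$ and free generators $\xi_1,\dots,\xi_n$ of a free group; throughout $i,j,k\in\{1,\dots,n\}$ and $t,s,p\in\{-1,+1\}$. Let $\Psi$ be the set of reduced words $\xi_i^{2t}$; $\xi_i^t\xi_j^{2s}$ ($i\ne j$); $\xi_i^t\xi_j^s\xi_k^p$ ($i\ne j$, $j\ne k$). For a letter $\xi_a^x$ let $S(\xi_a^x)\subset\Psi$ be the set of words in $\Psi$ beginning with $\xi_a^x$, namely $\{\xi_a^{2x}\}\cup\{\xi_a^x\xi_j^{2s}\}\cup\{\xi_a^x\xi_j^s\xi_k^p\}$; for $a\ne b$ let $S(\xi_a^x\xi_b^y)=\{\xi_a^x\xi_b^{2y}\}\cup\{\xi_a^x\xi_b^y\xi_k^p: k\ne b\}$. A relation $r$ is a pair $(\psi_r,\Psi_r)$ with $\psi_r\in\Psi$, $\Psi_r\subseteq\Psi$; the relations considered are (indices $i_0\ne j_0$, in type 5 $i_0,j_0,k_0$ pairwise distinct, all signs arbitrary): 1a: $\psi_r=\xi_{i_0}^{2t_0}$, $\Psi_r=\Psi\setminus S(\xi_{i_0}^{t_0})$; 1b: $\psi_r=\xi_{i_0}^{2t_0}$, $\Psi_r=\Psi\setminus\{\xi_{i_0}^{t_0}\xi_{j_0}^{s_0}\xi_{i_0}^{t_0}\}$; 2a: $\psi_r=\xi_{i_0}^{t_0}\xi_{j_0}^{2s_0}$,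 $\Psi_r=\Psi\setminus\{\xi_{j_0}^{2s_0}\}$; 2b: $\psi_r=\xi_{i_0}^{t_0}\xi_{j_0}^{2s_0}$, $\Psi_r=\Psi\setminus S(\xi_{i_0}^{t_0}\xi_{j_0}^{s_0})$; 3a: $\psi_r=\xi_{i_0}^{t_0}\xi_{j_0}^{s_0}\xi_{i_0}^{t_0}$, $\Psi_r=\Psi\setminus S(\xi_{j_0}^{s_0}\xi_{i_0}^{t_0})$; 3b: $\psi_r=\xi_{i_0}^{t_0}\xi_{j_0}^{s_0}\xi_{i_0}^{t_0}$, $\Psi_r=\Psi\setminus\{\xi_{i_0}^{2t_0}\}$; 4a: $\psi_r=\xi_{i_0}^{t_0}\xi_{j_0}^{s_0}\xi_{i_0}^{-t_0}$, $\Psi_r=\Psi\setminus S(\xi_{j_0}^{s_0}\xi_{i_0}^{-t_0})$; 4b: $\psi_r=\xi_{i_0}^{t_0}\xi_{j_0}^{s_0}\xi_{i_0}^{-t_0}$, $\Psi_r=S(\xi_{i_0}^{t_0})$; 5a: $\psi_r=\xi_{i_0}^{t_0}\xi_{j_0}^{s_0}\xi_{k_0}^{p_0}$, $\Psi_r=\Psi\setminus S(\xi_{j_0}^{s_0}\xi_{k_0}^{p_0})$; 5b: $\psi_r=\xi_{i_0}^{t_0}\xi_{j_0}^{s_0}\xi_{k_0}^{p_0}$, $\Psi_r=\Psi\setminus S(\xi_{i_0}^{t_0}\xi_{k_0}^{p_0})$. Let $\mathcal{G}$ be the collection of all these relations and $\mathcal{F}\subset\mathcal{G}$ those of types 1a,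 2b, 3a, 4b, 5a. Let $\Delta=\{x\in\mathbb{R}^\Psi: x(\psi)>0\ \forall\psi,\ \sum_{\psi}x(\psi)=1\}$. For a relation $r$ and $x\in\Delta$ put $x_r=x(\psi_r)$, $X_r=\sum_{\psi\in\Psi_r}x(\psi)$, $f_r(x)=\frac{1-x_r}{x_r}\cdot\frac{1-X_r}{X_r}$, $F(x)=\max_{r\in\mathcal{F}}f_r(x)$, $G(x)=\max_{r\in\mathcal{G}}f_r(x)$. The number $\alpha_n$ is the unique real root greater than $(2n-1)^2$ of $\mathcal{P}(\lambda)=(8n^3-12n^2+2n+1)\lambda^4+(-64n^6+192n^5-192n^4+64n^3+4n^2+2n-4)\lambda^3+(-96n^5+224n^4-168n^3+52n^2-18n+6)\lambda^2+(32n^5-112n^4+128n^3-68n^2+22n-4)\lambda+16n^4-32n^3+24n^2-8n+1.$ *)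

From HB Require Import structures.
From mathcomp Require Import all_boot all_order all_algebra.
From mathcomp Require Import boolp classical_sets reals.
Set Implicit Arguments. Unset Strict Implicit. Unset Printing Implicit Defensive.
Import Order.TTheory GRing.Theory Num.Theory.
Local Open Scope ring_scope.

(* A letter xi_i^t : generator index i : 'I_n, sign t (true = +1, false = -1). *)
Definition letter (n : nat) := ('I_n * bool)%type.
Definition linv n (a : letter n) : letter n := (a.1, ~~ a.2).

Definition raw (n : nat) := (letter n * letter n + letter n * letter n * letter n)%type.

Definition word n (w : raw n) : seq (letter n) :=
  match w with
  | inl (a, b) => [:: a; b]
  | inr (a, b, c) => [:: a; b; c]
  end.

(* Membership in Psi:  xi_i^{2t} = a a ;  xi_i^t xi_j^{2s} = a b b (i<>j);
   xi_i^t xi_j^s xi_k^p = a b c (i<>j, j<>k). *)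
Definition isPsi n (w : raw n) : bool :=
  match w with
  | inl (a, b) => a == b
  | inr (a, b, c) => (a.1 != b.1) && ((b == c) || (b.1 != c.1))
  end.

Definition Psi (n : nat) := {w : raw n | isPsi w}.
Definition pword n (w : Psi n) : seq (letter n) := word (val w).

Definition S1 n (a : letter n) : {set Psi n} :=
  [set w : Psi n | take 1 (pword w) == [:: a]].
(* S(xi_a^x xi_b^y) (a, b with distinct generators): the words of Psi of the
   form xi_a^x xi_b^{2y} or xi_a^x xi_b^y xi_k^p (k <> b), i.e. the
   three-letter words of Psi beginning with a b. *)
Definition S2 n (a b : letter n) : {set Psi n} :=
  [set w : Psi n | (size (pword w) == 3%N) && (take 2 (pword w) == [:: a; b])].
Definition Sw n (s : seq (letter n)) : {set Psi n} := [set w : Psi n | pword w == s].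

Definition relation (n : nat) := (Psi n * {set Psi n})%type.

Section Rels.
Variable n : nat.
Implicit Types (r : relation n).

Definition is1a r := [exists a : letter n,
  (pword r.1 == [:: a; a]) && (r.2 == ~: S1 a)].
Definition is1b r := [exists a : letter n, exists b : letter n,
  [&& a.1 != b.1, pword r.1 == [:: a; a] & r.2 == ~: Sw [:: a; b; a]]].
Definition is2a r := [exists a : letter n, exists b : letter n,
  [&& a.1 != b.1, pword r.1 == [:: a; b; b] & r.2 == ~: Sw [:: b; b]]].
Definition is2b r := [exists a : letter n, exists b : letter n,
  [&& a.1 != b.1, pword r.1 == [:: a; b; b] & r.2 == ~: S2 a b]].
Definition is3a r := [exists a : letter n, exists b : letter n,
  [&& a.1 != b.1, pword r.1 == [:: a; b; a] & r.2 == ~: S2 b a]].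
Definition is3b r := [exists a : letter n, exists b : letter n,
  [&& a.1 != b.1, pword r.1 == [:: a; b; a] & r.2 == ~: Sw [:: a; a]]].
Definition is4a r := [exists a : letter n, exists b : letter n,
  [&& a.1 != b.1, pword r.1 == [:: a; b; linv a] & r.2 == ~: S2 b (linv a)]].
Definition is4b r := [exists a : letter n, exists b : letter n,
  [&& a.1 != b.1, pword r.1 == [:: a; b; linv a] & r.2 == S1 a]].
Definition is5a r := [exists a : letter n, exists b : letter n, exists c : letter n,
  [&& a.1 != b.1, b.1 != c.1, a.1 != c.1, pword r.1 == [:: a; b; c] & r.2 == ~: S2 b c]].
Definition is5b r := [exists a : letter n, exists b : letter n, exists c : letter n,
  [&& a.1 != b.1, b.1 != c.1, a.1 != c.1, pword r.1 == [:: a; b; c] & r.2 == ~: S2 a c]].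

Definition inF r := [|| is1a r, is2b r, is3a r, is4b r | is5a r].
Definition inG r := [|| is1a r, is1b r, is2a r, is2b r, is3a r, is3b r, is4a r,
  is4b r, is5a r | is5b r].
End Rels.

Section Values.
Variables (R : realType) (n : nat).

Definition Delta : set (Psi n -> R) :=
  [set x | (forall psi, 0 < x psi) /\ \sum_(psi : Psi n) x psi = 1].

Definition xr (x : Psi n -> R) (r : relation n) : R := x r.1.
Definition Xr (x : Psi n -> R) (r : relation n) : R := \sum_(psi in r.2) x psi.
Definition fr (r : relation n) (x : Psi n -> R) : R :=
  (1 - xr x r) / xr x r * ((1 - Xr x r) / Xr x r).

(* F(x) = max_{r in F} f_r(x), G(x) = max_{r in G} f_r(x)
   (these collections are finite and nonempty, and f_r > 0 on Delta). *)
Definition Fmax (x : Psi n -> R) : R := \big[Num.max/0]_(r | inF r) fr r x.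
Definition Gmax (x : Psi n -> R) : R := \big[Num.max/0]_(r | inG r) fr r x.

Definition beta_star : R := inf [set Fmax x | x in Delta].
Definition alpha_star : R := inf [set Gmax x | x in Delta].

Definition Pn (l : R) : R :=
  let N := n%:R : R in
  (8*N^+3 - 12*N^+2 + 2*N + 1) * l^+4
  + (-64*N^+6 + 192*N^+5 - 192*N^+4 + 64*N^+3 + 4*N^+2 + 2*N - 4) * l^+3
  + (-96*N^+5 + 224*N^+4 - 168*N^+3 + 52*N^+2 - 18*N + 6) * l^+2
  + (32*N^+5 - 112*N^+4 + 128*N^+3 - 68*N^+2 + 22*N - 4) * l
  + (16*N^+4 - 32*N^+3 + 24*N^+2 - 8*N + 1).
End Values.

From HB Require Import structures.
From mathcomp Require Import all_boot all_order all_algebra.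
From mathcomp Require Import boolp classical_sets reals.
From mathcomp Require Import ring lra.
Import Order.TTheory GRing.Theory Num.Theory.
Set Implicit Arguments. Unset Strict Implicit. Unset Printing Implicit Defensive.
Local Open Scope ring_scope.

(* Lower bound: the masses of the sets S(xi_a^x) add up to 1 over the 2n
   letters, so one of them is at most 1/(2n) <= 1/4; the relation of type 4b
   with psi_r = xi_a^x xi_b^y xi_a^-x in S(xi_a^x) then has both factors
   (1 - u)/u of f_r at least 3, whence F >= 9 on Delta, and F <= G as F is a
   subcollection of G.
   Upper bound: with m = 2n and odds u = (1 - u)/u, put weight p on the
   squares, v on the words xi_a xi_b xi_a^-1 and y on the other three-letter
   words, where odds p = a (m - 1) and odds v = a / (m - 1).  Each S(xi_a xi_b)
   then has mass t = v + (m - 2) y and each S(xi_a) has mass p + (m - 2) t,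
   which is 1/m, so that x lies in Delta.  This fixes t and y as functions of
   a, and the last condition odds y = a odds t (f_r = a for type 2b) turns
   out to be equivalent to P(a) = 0.  For such a, every f_r(x) is at most a:
   each bound reduces to comparing two odds, i.e. to one of y <= 1/m,
   p <= t, t <= 1 - 1/m. *)

Lemma sumr_setC (R : zmodType) (T : finType) (S : {set T}) (F : T -> R) :
  \sum_(i in ~: S) F i = \sum_i F i - \sum_(i in S) F i.
Proof.
rewrite [\sum_i F i](bigID (mem S)) /= addrC addrK.
by apply: eq_bigl => i; rewrite inE.
Qed.

Lemma sumr_supp1 (R : nmodType) (T : finType) (F : T -> R) j :
  (forall i, i != j -> F i = 0) -> \sum_i F i = F j.
Proof. by move=> F0; rewrite (bigD1 j) //= big1 ?addr0. Qed.

Lemma exists_card_mul_le_sum (R : realDomainType) (T : finType) (F : T -> R) (i0 : T) :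
  exists i, #|T|%:R * F i <= \sum_j F j.
Proof.
case: (arg_minP F (P := xpredT) (i0 := i0) isT) => i _ min_i.
by exists i; rewrite mulr_natl -sumr_const; apply: ler_sum => j _; apply: min_i.
Qed.

Section Infima.
Local Open Scope classical_set_scope.
Variables (R : realType) (T : Type) (D : set T).
Hypothesis D0 : D !=set0.

Lemma lb_le_inf_image (f : T -> R) c : (forall x, D x -> c <= f x) -> c <= inf (f @` D).
Proof.
move=> f_ge; apply: lb_le_inf => [|_ [x Dx <-]]; last exact: f_ge.
by have [x Dx] := D0; exists (f x), x.
Qed.

Lemma inf_image_le (f : T -> R) c x : (forall x, D x -> c <= f x) -> D x ->
  inf (f @` D) <= f x.
Proof.
move=> f_ge Dx; apply: ge_inf; last by exists x.
by exists c => _ [y Dy <-]; apply: f_ge.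
Qed.

Lemma le_inf_image (f g : T -> R) c : (forall x, D x -> c <= f x) ->
  (forall x, D x -> f x <= g x) -> inf (f @` D) <= inf (g @` D).
Proof.
move=> f_ge fg; apply: lb_le_inf_image => x Dx.
exact: le_trans (inf_image_le f_ge Dx) (fg x Dx).
Qed.

End Infima.

Section Odds.
Variable R : realFieldType.
Implicit Types a u w : R.

Definition odds u := (1 - u) / u.

Lemma oddsE u : u != 0 -> odds u = u^-1 - 1.
Proof. by move=> u0; rewrite /odds mulrBl mul1r divff. Qed.

Lemma odds_gt0 u : 0 < u -> u < 1 -> 0 < odds u.
Proof. by move=> u0 u1; rewrite divr_gt0 // subr_gt0. Qed.

Lemma odds_1subr u : odds (1 - u) = (odds u)^-1.
Proof. by rewrite /odds subKr invf_div. Qed.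

Lemma odds_inv u : u != 0 -> odds u^-1 = u - 1.
Proof. by move=> u0; rewrite oddsE ?invr_eq0 // invrK. Qed.

Lemma ler_odds u w : 0 < u -> u <= w -> odds w <= odds u.
Proof.
move=> u0 uw; have w0 := lt_le_trans u0 uw.
by rewrite !oddsE ?gt_eqF // lerD2r lef_pV2.
Qed.

Lemma odds_mul_odds_1subr_le a u w :
  0 < odds w -> odds u <= a * odds w -> odds u * odds (1 - w) <= a.
Proof. by move=> w0 h; rewrite odds_1subr ler_pdivrMr. Qed.

Lemma odds_ge3 u : 0 < u -> u <= 4^-1 -> 3 <= odds u.
Proof.
move=> u0 u4; have -> : 3 = odds (4^-1 : R) by rewrite odds_inv //; lra.
exact: ler_odds.
Qed.

End Odds.

Lemma le_of_sqr_subr1_lt (R : realFieldType) (m a : R) :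
  3 <= m -> (m - 1) ^+ 2 < a -> m <= a.
Proof.
move=> m_ge3; have -> : (m - 1) ^+ 2 = m * (m - 3) + m + 1 by ring.
have : 0 <= m * (m - 3) by apply: mulr_ge0; lra.
lra.
Qed.

Section Weights.
Variables (R : realFieldType) (m a : R).

Definition sq_weight := (1 + a * (m - 1))^-1.
Definition conj_weight := (m - 1) / (a + m - 1).
Definition prefix_weight := (m^-1 - sq_weight) / (m - 2).
Definition generic_weight := (prefix_weight - conj_weight) / (m - 2).

Local Notation p := sq_weight.
Local Notation v := conj_weight.
Local Notation t := prefix_weight.
Local Notation y := generic_weight.

Lemma invm_gt0 (m_ge3 : 3 <= m) : 0 < m^-1.
Proof. by rewrite invr_gt0; lra. Qed.

Lemma invm_le_1subr (m_ge3 : 3 <= m) : m^-1 <= 1 - m^-1.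
Proof.
suff : m^-1 <= 3^-1 by lra.
by rewrite lef_pV2 ?posrE //; lra.
Qed.

Lemma sq_weight_gt0 (m_ge3 : 3 <= m) (m_le_a : m <= a) : 0 < p.
Proof. by rewrite invr_gt0; nra. Qed.

Lemma conj_weight_gt0 (m_ge3 : 3 <= m) (m_le_a : m <= a) : 0 < v.
Proof. by rewrite divr_gt0; lra. Qed.

Lemma odds_sq_weight (m_ge3 : 3 <= m) (m_le_a : m <= a) : odds p = a * odds m^-1.
Proof. by rewrite oddsE ?invr_eq0 ?invrK ?odds_inv; [ring | lra | nra]. Qed.

Lemma odds_conj_weight (m_ge3 : 3 <= m) (m_le_a : m <= a) :
  odds v = a * odds (1 - m^-1).
Proof.
rewrite odds_1subr odds_inv /odds /conj_weight; last lra.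
by field; apply/andP; split; apply/eqP; lra.
Qed.

Lemma sq_weight_add_prefix (m_ge3 : 3 <= m) : p + (m - 2) * t = m^-1.
Proof. by rewrite mulrC divfK ?[p + _]addrC ?subrK //; apply/eqP; lra. Qed.

Lemma conj_weight_add_generic (m_ge3 : 3 <= m) : v + (m - 2) * y = t.
Proof. by rewrite mulrC divfK ?[v + _]addrC ?subrK //; apply/eqP; lra. Qed.

Lemma sq_weight_le_prefix (m_ge3 : 3 <= m) (m_le_a : m <= a) : p <= t.
Proof.
have := sq_weight_add_prefix m_ge3; rewrite /sq_weight => masses.
suff : (m - 1) * (1 + a * (m - 1))^-1 <= m^-1 by nra.
rewrite mulrC ler_pdivrMl; last nra.
rewrite ler_pdivlMr; last lra.
nra.
Qed.

Lemma prefix_weight_gt0 (m_ge3 : 3 <= m) (m_le_a : m <= a) : 0 < t.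
Proof. exact: lt_le_trans (sq_weight_gt0 _ _) (sq_weight_le_prefix _ _). Qed.

Lemma prefix_weight_lt_invm (m_ge3 : 3 <= m) (m_le_a : m <= a) : t < m^-1.
Proof.
have := sq_weight_add_prefix m_ge3; have := sq_weight_gt0 m_ge3 m_le_a.
have := prefix_weight_gt0 m_ge3 m_le_a; nra.
Qed.

Lemma prefix_weight_lt1 (m_ge3 : 3 <= m) (m_le_a : m <= a) : t < 1.
Proof.
have := prefix_weight_lt_invm m_ge3 m_le_a; have := invm_le_1subr m_ge3.
have := invm_gt0 m_ge3; lra.
Qed.

Lemma generic_weight_gt0 (m_ge3 : 3 <= m) (m_le_a : m <= a) :
  a * y * (1 - t) = (1 - y) * t -> 0 < y.
Proof.
move=> balance; have t0 := prefix_weight_gt0 m_ge3 m_le_a.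
have t1 := prefix_weight_lt1 m_ge3 m_le_a.
rewrite ltNge; apply/negP => y_le0.
have : a * y * (1 - t) <= 0.
  by rewrite -mulrA; apply: mulr_ge0_le0; [lra | apply: mulr_le0_ge0; lra].
have : 0 < (1 - y) * t by apply: mulr_gt0; lra.
lra.
Qed.

Lemma generic_weight_lt_prefix (m_ge3 : 3 <= m) (m_le_a : m <= a) :
  a * y * (1 - t) = (1 - y) * t -> y < t.
Proof.
move=> /(generic_weight_gt0 m_ge3 m_le_a) y0.
have := conj_weight_add_generic m_ge3; have := conj_weight_gt0 m_ge3 m_le_a; nra.
Qed.

Lemma odds_generic_weight (m_ge3 : 3 <= m) (m_le_a : m <= a) :
  a * y * (1 - t) = (1 - y) * t -> odds y = a * odds t.
Proof.
move=> balance; have t0 := prefix_weight_gt0 m_ge3 m_le_a.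
have y0 := generic_weight_gt0 m_ge3 m_le_a balance.
rewrite /odds mulrA; apply/eqP.
by rewrite eqr_div ?(gt_eqF y0) ?(gt_eqF t0) // -balance; apply/eqP; ring.
Qed.

Lemma sq_weight_bounds (m_ge3 : 3 <= m) (m_le_a : m <= a) :
  a * y * (1 - t) = (1 - y) * t ->
  odds p * odds (1 - m^-1) <= a /\ odds p * odds (1 - y) <= a.
Proof.
move=> balance; have m0 := invm_gt0 m_ge3; have m1 := invm_le_1subr m_ge3.
have y0 := generic_weight_gt0 m_ge3 m_le_a balance.
have yt := generic_weight_lt_prefix m_ge3 m_le_a balance.
have tm := prefix_weight_lt_invm m_ge3 m_le_a.
by split; apply: odds_mul_odds_1subr_le;
  rewrite ?odds_gt0 ?(odds_sq_weight m_ge3 m_le_a) ?ler_wpM2l ?ler_odds //; lra.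
Qed.

Lemma generic_weight_bounds (m_ge3 : 3 <= m) (m_le_a : m <= a) :
  a * y * (1 - t) = (1 - y) * t ->
  odds y * odds (1 - p) <= a /\ odds y * odds (1 - t) <= a.
Proof.
move=> balance; have p0 := sq_weight_gt0 m_ge3 m_le_a.
have pt := sq_weight_le_prefix m_ge3 m_le_a.
have t1 := prefix_weight_lt1 m_ge3 m_le_a.
by split; apply: odds_mul_odds_1subr_le;
  rewrite ?odds_gt0 ?(odds_generic_weight m_ge3 m_le_a balance) ?ler_wpM2l ?ler_odds //; lra.
Qed.

Lemma conj_weight_bounds (m_ge3 : 3 <= m) (m_le_a : m <= a) :
  odds v * odds (1 - t) <= a /\ odds v * odds m^-1 <= a.
Proof.
have m0 := invm_gt0 m_ge3; have m1 := invm_le_1subr m_ge3.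
have t0 := prefix_weight_gt0 m_ge3 m_le_a; have tm := prefix_weight_lt_invm m_ge3 m_le_a.
split; last rewrite -[m^-1](subKr 1).
all: apply: odds_mul_odds_1subr_le;
  by rewrite ?odds_gt0 ?(odds_conj_weight m_ge3 m_le_a) ?ler_wpM2l ?ler_odds //; lra.
Qed.

End Weights.

Lemma balance_defectE (R : realType) (n : nat) (m a : R) :
  m = 2 * n%:R -> 3 <= m -> m <= a ->
  a * generic_weight m a * (1 - prefix_weight m a) -
    (1 - generic_weight m a) * prefix_weight m a =
  (m - 1) * Pn n a / ((m - 2) * (m * (m - 2) * (1 + a * (m - 1))) ^+ 2 * (a + m - 1)).
Proof.
move=> -> m_ge3 m_le_a; rewrite /generic_weight /prefix_weight /sq_weight /conj_weight /Pn.
by field; apply/and4P; split; apply/eqP; nra.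
Qed.

Lemma generic_weight_balance (R : realType) (n : nat) (m a : R) :
  m = 2 * n%:R -> 3 <= m -> m <= a -> Pn n a = 0 ->
  a * generic_weight m a * (1 - prefix_weight m a) =
  (1 - generic_weight m a) * prefix_weight m a.
Proof.
move=> mE m_ge3 m_le_a Pa; apply/eqP; rewrite -subr_eq0.
by rewrite (balance_defectE mE) // Pa mulr0 mul0r.
Qed.

Section Letters.
Variable n : nat.
Implicit Types a b c : letter n.

Lemma linvK : involutive (@linv n).
Proof. by case=> i s; rewrite /linv negbK. Qed.

Lemma linv_eq a b : (linv a == linv b) = (a == b).
Proof. exact/inj_eq/can_inj/linvK. Qed.

Lemma linv_neq a : a != linv a.
Proof. by case: a => i s; rewrite /linv xpair_eqE eqxx /=; case: s. Qed.

Lemma letter1_neq a b : (b.1 != a.1) = (b != a) && (b != linv a).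
Proof. by case: a b => [j r] [i s]; rewrite /linv !xpair_eqE; case: eqP; case: r s => -[]. Qed.

Lemma linv_neq1 a b : a.1 != b.1 -> b != linv a.
Proof. by rewrite eq_sym letter1_neq => /andP[]. Qed.

Lemma isPsi_inr a b c : isPsi (inr (a, b, c)) = (a.1 != b.1) && (c != linv b).
Proof.
congr andb; case: b c => [i s] [j r]; rewrite /linv /= !xpair_eqE.
case: (i =P j) => [->|/eqP ij]; first by rewrite eqxx; case: r s => -[].
by rewrite (eq_sym j) (negbTE ij).
Qed.

Lemma card_letter : #|{: letter n}| = (2 * n)%N.
Proof. by rewrite card_prod card_ord card_bool mulnC. Qed.

End Letters.

Section Words.
Variable n : nat.
Implicit Types a b c : letter n.

Definition first_letter (w : Psi n) : letter n :=
  match val w with inl (a, _) => a | inr (a, _, _) => a end.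

Lemma in_S1 (w : Psi n) a : (w \in S1 a) = (first_letter w == a).
Proof.
by rewrite inE /pword /first_letter; case: (val w) => [[? ?]|[[? ?] ?]]; rewrite /= eqseq_cons andbT.
Qed.

Lemma sum_S1_partition (R : nmodType) (x : Psi n -> R) :
  \sum_w x w = \sum_a \sum_(w in S1 a) x w.
Proof.
rewrite (partition_big first_letter xpredT) //=.
by apply: eq_bigr => a _; apply: eq_bigl => w; rewrite in_S1.
Qed.

Lemma pword_inj : injective (@pword n).
Proof.
move=> w w' e; apply: val_inj; move: e; rewrite /pword.
by case: (val w) (val w') => [[? ?]|[[? ?] ?]] [[? ?]|[[? ?] ?]] //= [-> ->] => [|->].
Qed.

Lemma Sw_word (u : raw n) (Pu : isPsi u) : Sw (word u) = [set exist _ u Pu].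
Proof. by apply/setP => w; rewrite !inE -(inj_eq pword_inj). Qed.

Lemma sum_Psi (R : nmodType) (G : raw n -> R) :
  \sum_(w : Psi n) G (val w) = \sum_a G (inl (a, a)) +
    \sum_a \sum_b \sum_(c | isPsi (inr (a, b, c))) G (inr (a, b, c)).
Proof.
rewrite -(big_sub (@isPsi n)) big_mkcond big_sumType /=; congr (_ + _).
  rewrite -big_mkcond; transitivity (\sum_a \sum_(b | b == a) G (inl (a, b))).
    by rewrite pair_big_dep; apply: eq_big => -[a b] //=; rewrite inE eq_sym.
  by apply: eq_bigr => a _; rewrite big_pred1_eq.
symmetry; rewrite pair_bigA pair_big_dep big_mkcond /=.
by apply: eq_bigr => -[[a b] c].
Qed.

End Words.

Lemma frE (R : realType) n (r : relation n) (x : Psi n -> R) :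
  fr r x = odds (x r.1) * odds (\sum_(w in r.2) x w).
Proof. by []. Qed.

Section WeightPoint.
Variables (R : realType) (n : nat) (p v y : R).
Implicit Types a b c : letter n.

Local Notation K := (2 * n%:R - 2 : R).

Definition raw_weight (u : raw n) : R :=
  match u with inl _ => p | inr (a, _, c) => if c == linv a then v else y end.

Definition weight_point (w : Psi n) : R := raw_weight (val w).

Lemma sum_letter_const (k : R) : \sum_(c : letter n) k = 2 * n%:R * k.
Proof. by rewrite sumr_const card_letter -[LHS]mulr_natr natrM mulrC. Qed.

Lemma sum_letter_neq2 (d e : letter n) (k : R) : d != e ->
  \sum_(c | (c != d) && (c != e)) k = K * k.
Proof.
move=> de; have := sum_letter_const k.
rewrite (bigD1 d) //= (bigD1 e) 1?eq_sym //= => sumE.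
by apply/(addrI k)/(addrI k); rewrite sumE; ring.
Qed.

Lemma sum_third_letter a b : a.1 != b.1 ->
  \sum_(c | isPsi (inr (a, b, c))) raw_weight (inr (a, b, c)) = v + K * y.
Proof.
move=> ab; rewrite (eq_bigl (fun c => c != linv b)) => [|c]; last by rewrite isPsi_inr ab.
have ab' : linv a != linv b by rewrite linv_eq; apply: contraNneq ab => ->.
rewrite (bigD1 (linv a)) //= eqxx; congr (_ + _).
rewrite (eq_bigr (fun _ => y)) => [|c /andP[_ /negbTE->]] //.
by rewrite sum_letter_neq2 // eq_sym.
Qed.

Lemma sum_last_letters a :
  \sum_b \sum_(c | isPsi (inr (a, b, c))) raw_weight (inr (a, b, c)) = K * (v + K * y).
Proof.
rewrite (bigID (fun b => a.1 != b.1)) /= [X in _ + X]big1 => [|b /negPn ab]; last first.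
  by apply: big_pred0 => c; rewrite ab.
rewrite addr0 (eq_bigr (fun _ => v + K * y)) => [|b]; last exact: sum_third_letter.
rewrite (eq_bigl (fun b => (b != a) && (b != linv a))) => [|b]; last by rewrite eq_sym letter1_neq.
exact: sum_letter_neq2 (linv_neq a).
Qed.

Local Notation x := weight_point.

Lemma sum_S2_point a b : a.1 != b.1 -> \sum_(w in S2 a b) x w = v + K * y.
Proof.
move=> ab; pose G u := if (size (word u) == 3%N) && (take 2 (word u) == [:: a; b])
  then raw_weight u else 0.
rewrite big_mkcond (eq_bigr (G \o val)) => [|w _]; last by rewrite inE.
rewrite sum_Psi big1 ?add0r // (sumr_supp1 (j := a)) => [|a' a'a]; last first.
  by do 2!apply: big1 => ? _; rewrite /G /= eqseq_cons (negbTE a'a).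
rewrite (sumr_supp1 (j := b)) => [|b' b'b]; last first.
  by apply: big1 => ? _; rewrite /G /= !eqseq_cons (negbTE b'b) andbF.
by rewrite -(sum_third_letter ab); apply: eq_bigr => c _; rewrite /G /= !eqxx.
Qed.

Lemma sum_S1_point a : \sum_(w in S1 a) x w = p + K * (v + K * y).
Proof.
pose G u := if take 1 (word u) == [:: a] then raw_weight u else 0.
rewrite big_mkcond (eq_bigr (G \o val)) => [|w _]; last by rewrite inE.
rewrite sum_Psi; congr (_ + _).
  by rewrite (sumr_supp1 (j := a)) => [|a' a'a]; rewrite /G /= eqseq_cons ?eqxx ?(negbTE a'a).
rewrite (sumr_supp1 (j := a)) => [|a' a'a]; last first.
  by do 2!apply: big1 => ? _; rewrite /G /= eqseq_cons (negbTE a'a).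
by rewrite -(sum_last_letters a); do 2!apply: eq_bigr => ? _; rewrite /G /= eqxx.
Qed.

Lemma sum_point : \sum_w x w = 2 * n%:R * (p + K * (v + K * y)).
Proof.
rewrite sum_S1_partition -sum_letter_const.
by apply: eq_bigr => a _; rewrite sum_S1_point.
Qed.

Lemma weight_point_sq w a : pword w = [:: a; a] -> x w = p.
Proof. by rewrite /weight_point /pword; case: (val w) => [[? ?]|[[? ?] ?]]. Qed.

Lemma weight_point_conj w a b : pword w = [:: a; b; linv a] -> x w = v.
Proof.
by rewrite /weight_point /pword; case: (val w) => [[? ?]|[[? ?] ?]] //= [-> _ ->]; rewrite eqxx.
Qed.

Lemma weight_point_generic w a b c :
  pword w = [:: a; b; c] -> c != linv a -> x w = y.
Proof.
by rewrite /weight_point /pword; case: (val w) => [[? ?]|[[? ?] ?]] //= [-> _ ->] /negbTE->.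
Qed.

Lemma sum_Sw_point (u : raw n) : isPsi u -> \sum_(w in Sw (word u)) x w = raw_weight u.
Proof. by move=> Pu; rewrite (Sw_word Pu) big_set1. Qed.

Hypothesis sum_point1 : 2 * n%:R * (p + K * (v + K * y)) = 1.

Lemma weight_point_Delta : 0 < p -> 0 < v -> 0 < y -> Delta x.
Proof.
move=> p0 v0 y0; split; last by rewrite sum_point.
by move=> w; rewrite /x /weight_point; case: (val w) => [[? ?]|[[? ?] ?]] //=; case: ifP.
Qed.

Lemma sum_setC_point (S : {set Psi n}) : \sum_(w in ~: S) x w = 1 - \sum_(w in S) x w.
Proof. by rewrite sumr_setC sum_point sum_point1. Qed.

Variable lam : R.
Let t := v + K * y.
Let s := p + K * t.
Hypotheses (lam_ge0 : 0 <= lam)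
  (le_1a : odds p * odds (1 - s) <= lam) (le_1b : odds p * odds (1 - y) <= lam)
  (le_2a : odds y * odds (1 - p) <= lam) (le_2b : odds y * odds (1 - t) <= lam)
  (le_4a : odds v * odds (1 - t) <= lam) (le_4b : odds v * odds s <= lam).

Lemma Gmax_weight_point_le : Gmax x <= lam.
Proof.
apply: bigmax_le => // r; rewrite frE.
case/orP=> [|/orP[|/orP[|/orP[|/orP[|/orP[|/orP[|/orP[|/orP[]]]]]]]]].
- case/existsP=> a /andP[/eqP/weight_point_sq-> /eqP->].
  by rewrite sum_setC_point sum_S1_point.
- case/existsP=> a /existsP[b /and3P[ab /eqP/weight_point_sq-> /eqP->]].
  rewrite sum_setC_point (sum_Sw_point (u := inr (a, b, a))); last first.
    by rewrite isPsi_inr ab linv_neq1 // eq_sym.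
  by rewrite /= (negbTE (linv_neq a)).
- case/existsP=> a /existsP[b /and3P[ab /eqP hw /eqP->]].
  rewrite (weight_point_generic hw (linv_neq1 ab)) sum_setC_point.
  by rewrite (sum_Sw_point (u := inl (b, b))) //=.
- case/existsP=> a /existsP[b /and3P[ab /eqP hw /eqP->]].
  by rewrite (weight_point_generic hw (linv_neq1 ab)) sum_setC_point sum_S2_point.
- case/existsP=> a /existsP[b /and3P[ab /eqP hw /eqP->]].
  rewrite (weight_point_generic hw (linv_neq a)) sum_setC_point.
  by rewrite sum_S2_point // eq_sym.
- case/existsP=> a /existsP[b /and3P[_ /eqP hw /eqP->]].
  rewrite (weight_point_generic hw (linv_neq a)) sum_setC_point.
  by rewrite (sum_Sw_point (u := inl (a, a))) //=.
- case/existsP=> a /existsP[b /and3P[ab /eqP/weight_point_conj-> /eqP->]].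
  by rewrite sum_setC_point sum_S2_point // eq_sym.
- case/existsP=> a /existsP[b /and3P[_ /eqP/weight_point_conj-> /eqP->]].
  by rewrite sum_S1_point.
- case/existsP=> a /existsP[b /existsP[c /and5P[_ bc ac /eqP hw /eqP->]]].
  by rewrite (weight_point_generic hw (linv_neq1 ac)) sum_setC_point sum_S2_point.
- case/existsP=> a /existsP[b /existsP[c /and5P[_ _ ac /eqP hw /eqP->]]].
  by rewrite (weight_point_generic hw (linv_neq1 ac)) sum_setC_point sum_S2_point.
Qed.

End WeightPoint.

Lemma inF_inG n (r : relation n) : inF r -> inG r.
Proof.
rewrite /inF /inG; move: (is1a r) (is1b r) (is2a r) (is2b r) (is3a r) (is3b r).
by move: (is4a r) (is4b r) (is5a r) (is5b r); do 10!case.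
Qed.

Lemma Fmax_le_Gmax (R : realType) n (x : Psi n -> R) : Fmax x <= Gmax x.
Proof. exact/sub_bigmax/inF_inG. Qed.

Section LowerBound.
Variables (R : realType) (n : nat).
Hypothesis n_gt1 : (1 < n)%N.
Implicit Types a b : letter n.

Lemma exists_letter_neq1 a : exists b, a.1 != b.1.
Proof.
pose i0 : 'I_n := Ordinal (ltnW n_gt1); pose i1 : 'I_n := Ordinal n_gt1.
case: (a.1 =P i0) => [->|/eqP a0]; last by exists (i0, true).
by exists (i1, true).
Qed.

Lemma exists_S1_mass_le (x : Psi n -> R) : Delta x ->
  exists a, 2 * n%:R * \sum_(w in S1 a) x w <= 1.
Proof.
case=> _ sum_x; have [a] := exists_card_mul_le_sum (fun a => \sum_(w in S1 a) x w)
  (Ordinal (ltnW n_gt1), true).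
by rewrite -sum_S1_partition sum_x card_letter natrM => ?; exists a.
Qed.

Lemma Fmax_ge9 (x : Psi n -> R) : Delta x -> 9 <= Fmax x.
Proof.
move=> Dx; have [x_gt0 _] := Dx; have [a mass_a] := exists_S1_mass_le Dx.
have [b ab] := exists_letter_neq1 a.
have Pw : isPsi (inr (a, b, linv a)).
  by rewrite isPsi_inr ab linv_eq; apply: contraNneq ab => ->.
pose w : Psi n := exist _ (inr (a, b, linv a)) Pw.
have Fw : inF (w, S1 a).
  do 3!apply/orP/or_intror; apply/orP/or_introl/existsP; exists a.
  by apply/existsP; exists b; rewrite ab !eqxx.
apply: le_trans (le_bigmax_cond _ _ Fw); rewrite frE /=.
have w_le : x w <= \sum_(w' in S1 a) x w'.
  by rewrite (bigD1 w) ?in_S1 //= lerDl sumr_ge0 // => ? _; apply/ltW.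
have w0 := x_gt0 w; have n2 : 2 <= n%:R :> R by rewrite (ler_nat R 2).
have mass_le : \sum_(w' in S1 a) x w' <= 4^-1.
  rewrite -(ler_pM2l (_ : 0 < 4)) ?mulfV //; nra.
rewrite [9](_ : _ = 3 * 3); last by rewrite -natrM.
by apply: ler_pM; rewrite ?odds_ge3 //; lra.
Qed.

End LowerBound.

Lemma Delta_neq0 (R : realType) n : (0 < n)%N -> (@Delta R n !=set0)%classic.
Proof.
move=> n0; pose a : letter n := (Ordinal n0, true); pose k := #|{: Psi n}|.
have k0 : (0 < k)%N by apply/card_gt0P; exists (exist _ (inl (a, a)) (eqxx a)).
exists (fun _ => k%:R^-1); split => [_|]; first by rewrite invr_gt0 ltr0n.
by rewrite sumr_const -[LHS]mulr_natr mulVf // pnatr_eq0 -lt0n.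
Qed.

Lemma exists_Delta_Gmax_le (R : realType) n (a : R) :
  (2 <= n)%N -> (2 * n%:R - 1) ^+ 2 < a -> Pn n a = 0 ->
  exists2 x : Psi n -> R, Delta x & Gmax x <= a.
Proof.
move=> n_ge2 a_gt Pa; have n2 : 2 <= n%:R :> R by rewrite (ler_nat R 2).
pose m : R := 2 * n%:R; have m_ge3 : 3 <= m by rewrite /m; lra.
have m_le_a := le_of_sqr_subr1_lt m_ge3 a_gt.
have balance := generic_weight_balance erefl m_ge3 m_le_a Pa.
pose p := sq_weight m a; pose v := conj_weight m a; pose y := generic_weight m a.
have masses : m * (p + (m - 2) * (v + (m - 2) * y)) = 1.
  by rewrite conj_weight_add_generic // sq_weight_add_prefix // mulfV //; lra.
have [le_1a le_1b] := sq_weight_bounds m_ge3 m_le_a balance.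
have [le_2a le_2b] := generic_weight_bounds m_ge3 m_le_a balance.
have [le_4a le_4b] := conj_weight_bounds m_ge3 m_le_a.
exists (weight_point p v y).
  by apply: weight_point_Delta; rewrite ?sq_weight_gt0 ?conj_weight_gt0 ?generic_weight_gt0.
apply: (Gmax_weight_point_le masses); rewrite ?conj_weight_add_generic ?sq_weight_add_prefix //.
lra.
Qed.

Unset Implicit Arguments.

(* alpha_n enters only through its defining property: the bound is proved for
   every root of P above (2n - 1)^2. *)
Theorem lemma5p3 (R : realType) (n : nat) (hn : (2 <= n)%N) :
  1 < beta_star R n /\ beta_star R n <= alpha_star R n /\
  (forall a : R, (2 * n%:R - 1) ^+ 2 < a -> Pn n a = 0 -> alpha_star R n <= a).
Proof.
have D0 := Delta_neq0 R (ltnW hn).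
have F9 := @Fmax_ge9 R n hn.
have G9 x (Dx : Delta x) := le_trans (F9 x Dx) (Fmax_le_Gmax x).
split; first by apply: lt_le_trans (lb_le_inf_image D0 F9); lra.
split; first by apply: (le_inf_image D0 F9) => x _; apply: Fmax_le_Gmax.
move=> a a_gt Pa; have [x Dx Gx] := exists_Delta_Gmax_le hn a_gt Pa.
exact: le_trans (inf_image_le G9 Dx) Gx.
Qed.
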